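(* Let $\bm S\in\mathcal{S}^N$ with eigendecomposition $\bm S=\bm Q\bm\Lambda\bm Q^T$, $\bm Q\in{\rm O}(N)$, $\bm\Lambda\in\mathcal{D}_N$ with non-increasing diagonal entries. Let $\bm\Lambda_o\in\mathcal{D}_N$ have non-increasing diagonal entries, let $0\le\epsilon<\infty$, and let $\mathcal{M}_\epsilon:=\{\bm V(\bm\Lambda_o+\bm\Lambda_\epsilon)\bm V^T:\ \bm V\in{\rm O}(N),\ \bm\Lambda_\epsilon\in\mathcal{D}_N,\ \Vert\bm\Lambda_\epsilon\Vert_2\le\epsilon\}$. Let $$\bm\Lambda_\epsilon^*:=\arg\min_{\bm\Lambda_\epsilon\in\mathcal{D}_N,\ \Vert\bm\Lambda_\epsilon\Vert_2\le\epsilon}\Vert\bm\Lambda-\bm\Lambda_o-\bm\Lambda_\epsilon\Vert_{\rm F}.$$ Then $\bm Q(\bm\Lambda_o+\bm\Lambda_\epsilon^* )\bm Q^T$ is a best approximant of $\bm S$ in $\mathcal{M}_\epsilon$ in the Frobenius norm, i.e., it belongs to $\mathcal{M}_\epsilon$ and minimizes $\Vert\bm S-\bm M\Vert_{\rm F}$ over $\bm M\in\mathcal{M}_\epsilon$.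
   Context: $\mathcal{S}^N$: real symmetric $N\times N$ matrices; $\mathcal{D}_N$: real $N\times N$ diagonal matrices; ${\rm O}(N)$: $N\times N$ orthogonal matrices; $\Vert\cdot\Vert_2$: spectral norm; $\Vert\cdot\Vert_{\rm F}$: Frobenius norm; non-increasing diagonal means $[\bm\Lambda]_{ii}\ge[\bm\Lambda]_{jj}$ for $i<j$. *)

From HB Require Import structures.
From mathcomp Require Import all_boot all_order all_algebra.
Set Implicit Arguments. Unset Strict Implicit. Unset Printing Implicit Defensive.
Import Order.TTheory GRing.Theory Num.Theory.
Local Open Scope ring_scope.

Definition sym_mx (R : rcfType) (N : nat) (A : 'M[R]_N) : Prop := A^T = A.

Definition orth_mx (R : rcfType) (N : nat) (Q : 'M[R]_N) : Prop :=
  Q *m Q^T = 1%:M /\ Q^T *m Q = 1%:M.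

Definition is_diagonal (R : rcfType) (N : nat) (D : 'M[R]_N) : Prop := is_diag_mx D.

Definition nonincr_diag (R : rcfType) (N : nat) (D : 'M[R]_N) : Prop :=
  forall i j : 'I_N, (i <= j)%N -> D j j <= D i i.

Definition frob (R : rcfType) (m n : nat) (A : 'M[R]_(m, n)) : R :=
  Num.sqrt (\sum_(i < m) \sum_(j < n) A i j ^+ 2).

Definition vnorm (R : rcfType) (N : nat) (x : 'cV[R]_N) : R := frob x.

(* ||A||_2 <= eps for the spectral (operator 2-)norm:
   ||A||_2 = sup_{x <> 0} ||A x|| / ||x||, so ||A||_2 <= eps iff
   ||A x|| <= eps ||x|| for every x. *)
Definition spec_norm_le (R : rcfType) (N : nat) (A : 'M[R]_N) (eps : R) : Prop :=
  forall x : 'cV[R]_N, vnorm (A *m x) <= eps * vnorm x.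

Definition Meps (R : rcfType) (N : nat) (Lo : 'M[R]_N) (eps : R) (M : 'M[R]_N) : Prop :=
  exists V Le : 'M[R]_N,
    [/\ orth_mx V, is_diagonal Le, spec_norm_le Le eps &
        M = V *m (Lo + Le) *m V^T].

From HB Require Import structures.
From mathcomp Require Import all_boot all_order all_algebra.
From mathcomp Require Import ring lra zify.
Import Order.TTheory GRing.Theory Num.Theory.
Local Open Scope ring_scope.
Set Implicit Arguments. Unset Strict Implicit. Unset Printing Implicit Defensive.

(* Write a model as M = V D V^T with D = Lo + Le and put W = Q^T V, an
   orthogonal matrix.  Then ||S - M||_F^2 = sum_ij W_ij^2 (l_i - lo_j - e_j)^2,
   and each term is at least W_ij^2 c(i, j), where c(i, j) = dist2(l_i - lo_j)
   is the squared distance from l_i - lo_j to [-eps, eps].  Since (W_ij^2) is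
   doubly stochastic and c is a Monge cost (dist2 is convex and both diagonals
   are non-increasing), the weighted sum is at least the identity assignment
   sum_i c(i, i); this is proved with an explicit dual potential.  Finally
   sum_i c(i, i) is the residual of the diagonal matrix obtained by clamping
   L - Lo into [-eps, eps], which the minimiser Lstar beats, and the residual
   of Q (Lo + Lstar) Q^T equals that of Lstar by orthogonal invariance. *)

Section ClampedDistance.
Variable R : rcfType.

Definition ramp2 (x : R) : R := (Num.max x 0) ^+ 2.

Lemma ramp2_nonpos (x : R) : x <= 0 -> ramp2 x = 0.
Proof. by move=> x0; rewrite /ramp2 max_r // expr0n. Qed.

Lemma ramp2_nonneg (x : R) : 0 <= x -> ramp2 x = x ^+ 2.
Proof. by move=> x0; rewrite /ramp2 max_l. Qed.

(* Convexity of ramp2 in exchange form: moving two points y, z apart to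
   s <= y, z <= t while keeping their sum does not decrease ramp2 y + ramp2 z. *)
Lemma ramp2_exchange (s y z t : R) :
  s <= y -> y <= t -> s <= z -> z <= t -> y + z = s + t ->
  ramp2 y + ramp2 z <= ramp2 s + ramp2 t.
Proof.
move=> sy yt sz zt e.
have yz_st : s * t <= y * z.
  have := @mulr_ge0 _ (y - s) (t - y); rewrite !subr_ge0 => /(_ sy yt); nra.
have [t0|t0] := orP (le_total t 0).
  by rewrite !ramp2_nonpos ?addr0 //; lra.
rewrite [ramp2 t]ramp2_nonneg //.
have [s0|s0] := orP (le_total 0 s).
  have sq_sum : (y + z) ^+ 2 = (s + t) ^+ 2 by rewrite e.
  by rewrite !ramp2_nonneg; try lra; nra.
rewrite [ramp2 s]ramp2_nonpos // add0r.
have [y0|y0] := orP (le_total 0 y); have [z0|z0] := orP (le_total 0 z);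
  rewrite ?(ramp2_nonneg y0) ?(ramp2_nonneg z0) ?(ramp2_nonpos y0)
          ?(ramp2_nonpos z0) ?addr0 ?add0r.
- have := mulr_ge0 y0 z0; nra.
- have := @mulr_ge0 _ y (t - y); rewrite subr_ge0 => /(_ y0 yt); nra.
- have := @mulr_ge0 _ z (t - z); rewrite subr_ge0 => /(_ z0 zt); nra.
- exact: sqr_ge0.
Qed.

Definition clamp (eps x : R) : R :=
  if eps < x then eps else if x < - eps then - eps else x.

Definition dist2 (eps x : R) : R := (x - clamp eps x) ^+ 2.

Lemma clamp_norm (eps x : R) : 0 <= eps -> `|clamp eps x| <= eps.
Proof.
move=> eps_ge0; rewrite /clamp ler_norml.
by case: ltP => h1; [lra|]; case: ltP => h2; lra.
Qed.

Lemma dist2_le_sqr (eps x e : R) : `|e| <= eps -> dist2 eps x <= (x - e) ^+ 2.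
Proof.
rewrite /dist2 /clamp ler_norml => /andP[h1 h2].
case: ltP => h3; [|case: ltP => h4]; rewrite ?subrr ?expr0n ?sqr_ge0 //; nra.
Qed.

Lemma dist2_ramp2 (eps x : R) : 0 <= eps ->
  dist2 eps x = ramp2 (x - eps) + ramp2 (- x - eps).
Proof.
move=> eps_ge0; rewrite /dist2 /clamp.
case: ltP => h1; [|case: ltP => h2].
- by rewrite ramp2_nonneg ?ramp2_nonpos ?addr0 //; lra.
- by rewrite ramp2_nonpos ?ramp2_nonneg ?add0r; lra.
- by rewrite subrr !ramp2_nonpos ?expr0n ?addr0 //; lra.
Qed.

(* Exchange (submodularity) inequality for (a, b) |-> dist2 (a - b), inherited
   from the convexity of the two ramps. *)
Lemma dist2_exchange (eps a a' b b' : R) : 0 <= eps -> a <= a' -> b <= b' ->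
  dist2 eps (a' - b') + dist2 eps (a - b) <= dist2 eps (a' - b) + dist2 eps (a - b').
Proof.
move=> eps_ge0 aa bb; rewrite !dist2_ramp2 //.
have up := @ramp2_exchange (a - b' - eps) (a' - b' - eps) (a - b - eps) (a' - b - eps).
have dn := @ramp2_exchange (- (a' - b) - eps) (- (a' - b') - eps) (- (a - b) - eps) (- (a - b') - eps).
have := up ltac:(lra) ltac:(lra) ltac:(lra) ltac:(lra) ltac:(ring).
have := dn ltac:(lra) ltac:(lra) ltac:(lra) ltac:(lra) ltac:(ring).
lra.
Qed.
End ClampedDistance.

Section MongeAssignment.
Variables (R : rcfType) (N : nat) (c : nat -> nat -> R).

Hypothesis c_monge : forall i i' j j', (i <= i' < N)%N -> (j <= j' < N)%N ->
  c i j + c i' j' <= c i j' + c i' j.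

(* A dual potential u: u i + (c j j - u j) <= c i j with equality on i = j. *)
Definition potential (n : nat) : R := \sum_(k < n) (c k.+1 k - c k k).

Lemma potentialS n : potential n.+1 = potential n + (c n.+1 n - c n n).
Proof. by rewrite /potential big_ord_recr. Qed.

(* Dual feasibility, proved by walking from j up to i and from i up to j. *)
Lemma potential_le_below j d : (j + d < N)%N ->
  potential (j + d) - potential j <= c (j + d) j - c j j.
Proof.
elim: d => [|d IH] lt_jdN; first by rewrite addn0 !subrr.
rewrite addnS in lt_jdN *.
have := IH (ltnW lt_jdN).
have := @c_monge (j + d) (j + d).+1 j (j + d) ltac:(apply/andP; split; lia)
  ltac:(apply/andP; split; lia).
rewrite potentialS; lra.
Qed.

Lemma potential_le_above i d : (i + d < N)%N ->
  potential i - potential (i + d) <= c i (i + d) - c (i + d) (i + d).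
Proof.
elim: d => [|d IH] lt_idN; first by rewrite addn0 !subrr.
rewrite addnS in lt_idN *.
have := IH (ltnW lt_idN).
have := @c_monge i (i + d).+1 (i + d) (i + d).+1 ltac:(apply/andP; split; lia)
  ltac:(apply/andP; split; lia).
rewrite potentialS; lra.
Qed.

Lemma potential_le i j : (i < N)%N -> (j < N)%N ->
  potential i - potential j <= c i j - c j j.
Proof.
move=> lt_iN lt_jN; have [le_ji|le_ij] := leqP j i.
  by rewrite -(subnKC le_ji); apply: potential_le_below; rewrite subnKC.
rewrite -(subnKC (ltnW le_ij)); apply: potential_le_above; rewrite subnKC //.
exact: ltnW.
Qed.

(* Weak duality against the potential u. *)
Lemma monge_assignment (P : 'I_N -> 'I_N -> R) :
  (forall i j, 0 <= P i j) ->
  (forall i, \sum_j P i j = 1) -> (forall j, \sum_i P i j = 1) ->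
  \sum_(i < N) c i i <= \sum_i \sum_j P i j * c i j.
Proof.
move=> P_ge0 rowP colP; pose v j := c j j - potential j.
have dual (i j : 'I_N) : potential i + v j <= c i j.
  by have := potential_le (ltn_ord i) (ltn_ord j); rewrite /v; lra.
have lhsE : \sum_(i < N) c i i = \sum_(i < N) potential i + \sum_(j < N) v j.
  by rewrite -big_split; apply: eq_bigr => i _; rewrite /v /= addrCA subrr addr0.
have rhsE : \sum_i \sum_j P i j * (potential i + v j) =
            \sum_(i < N) potential i + \sum_(j < N) v j.
  transitivity (\sum_i \sum_j P i j * potential i + \sum_i \sum_j P i j * v j).
    rewrite -big_split; apply: eq_bigr => i _.
    by rewrite -big_split; apply: eq_bigr => j _; rewrite mulrDr.
  rewrite [X in _ + X]exchange_big; congr (_ + _); apply: eq_bigr => k _.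
    by rewrite -mulr_suml rowP mul1r.
  by rewrite -mulr_suml colP mul1r.
rewrite lhsE -rhsE; apply: ler_sum => i _; apply: ler_sum => j _.
exact: ler_wpM2l.
Qed.

End MongeAssignment.

Section FrobeniusNorm.
Variable R : rcfType.

Definition frob2 (m n : nat) (A : 'M[R]_(m, n)) : R := \sum_i \sum_j A i j ^+ 2.

Lemma frob2_tr m n (A : 'M[R]_(m, n)) : frob2 A = \tr (A *m A^T).
Proof.
rewrite /frob2 /mxtrace; apply: eq_bigr => i _; rewrite mxE.
by apply: eq_bigr => j _; rewrite !mxE expr2.
Qed.

Lemma frob_le m n (A B : 'M[R]_(m, n)) : frob2 A <= frob2 B -> frob A <= frob B.
Proof. exact: ler_wsqrtr. Qed.

Lemma orth_mx_tr n (U : 'M[R]_n) : orth_mx U -> orth_mx U^T.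
Proof. by case=> U_r U_l; split; rewrite trmxK. Qed.

Lemma orth_mx_mul n (U V : 'M[R]_n) : orth_mx U -> orth_mx V -> orth_mx (U *m V).
Proof.
case=> U_r U_l [V_r V_l]; rewrite /orth_mx trmx_mul; split.
  by rewrite mulmxA -(mulmxA U) V_r mulmx1 U_r.
by rewrite mulmxA -(mulmxA V^T) U_l mulmx1 V_l.
Qed.

Lemma frob_orth_mul m n (U : 'M[R]_m) (A : 'M[R]_(m, n)) (V : 'M[R]_n) :
  orth_mx U -> orth_mx V -> frob (U *m A *m V^T) = frob A.
Proof.
case=> _ U_l [_ V_l]; rewrite /frob -!/(frob2 _) !frob2_tr !trmx_mul trmxK.
by rewrite !mulmxA -(mulmxA _ V^T) V_l mulmx1 mxtrace_mulC !mulmxA U_l mul1mx.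
Qed.

Lemma orth_row_sqr n (W : 'M[R]_n) i : orth_mx W -> \sum_j W i j ^+ 2 = 1.
Proof.
case=> W_r _; have := congr1 (fun A : 'M[R]_n => A i i) W_r.
rewrite !mxE eqxx mulr1n => <-.
by apply: eq_bigr => j _; rewrite !mxE expr2.
Qed.

Lemma orth_col_sqr n (W : 'M[R]_n) j : orth_mx W -> \sum_i W i j ^+ 2 = 1.
Proof.
move/orth_mx_tr/(orth_row_sqr j) <-.
by apply: eq_bigr => i _; rewrite mxE.
Qed.
End FrobeniusNorm.

Section DiagonalMatrices.
Variable R : rcfType.

Lemma is_diag_mxD n (A B : 'M[R]_n) :
  is_diag_mx A -> is_diag_mx B -> is_diag_mx (A + B).
Proof.
move=> /is_diag_mxP A_diag /is_diag_mxP B_diag; apply/is_diag_mxP => i j ij.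
by rewrite mxE A_diag ?B_diag ?addr0.
Qed.

Lemma is_diag_mxB n (A B : 'M[R]_n) :
  is_diag_mx A -> is_diag_mx B -> is_diag_mx (A - B).
Proof.
move=> /is_diag_mxP A_diag /is_diag_mxP B_diag; apply/is_diag_mxP => i j ij.
by rewrite !mxE A_diag ?B_diag ?subrr.
Qed.

Lemma diag_mulmx m n (L : 'M[R]_m) (W : 'M[R]_(m, n)) i j :
  is_diag_mx L -> (L *m W) i j = L i i * W i j.
Proof.
move=> /is_diag_mxP L_diag; rewrite mxE (bigD1 i) //= big1 ?addr0 // => k ki.
by rewrite L_diag ?mul0r // eq_sym.
Qed.

Lemma mulmx_diag m n (W : 'M[R]_(m, n)) (D : 'M[R]_n) i j :
  is_diag_mx D -> (W *m D) i j = W i j * D j j.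
Proof.
move=> /is_diag_mxP D_diag; rewrite mxE (bigD1 j) //= big1 ?addr0 // => k kj.
by rewrite D_diag ?mulr0.
Qed.

Lemma frob2_diag n (A : 'M[R]_n) : is_diag_mx A -> frob2 A = \sum_i A i i ^+ 2.
Proof.
move=> /is_diag_mxP A_diag; apply: eq_bigr => i _.
by rewrite (bigD1 i) //= big1 ?addr0 // => k ki; rewrite A_diag ?expr0n // eq_sym.
Qed.

Lemma frob2_diag_twist n (L D W : 'M[R]_n) : is_diag_mx L -> is_diag_mx D ->
  frob2 (L *m W - W *m D) = \sum_i \sum_j W i j ^+ 2 * (L i i - D j j) ^+ 2.
Proof.
move=> L_diag D_diag; apply: eq_bigr => i _; apply: eq_bigr => j _.
have -> : (L *m W - W *m D) i j = (L *m W) i j - (W *m D) i j by rewrite !mxE.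
by rewrite diag_mulmx // mulmx_diag // -exprMn mulrBr mulrC.
Qed.

(* Testing the spectral bound on a basis vector bounds each diagonal entry. *)
Lemma spec_norm_diag_entry n (D : 'M[R]_n) eps : is_diag_mx D ->
  spec_norm_le D eps -> forall j, `|D j j| <= eps.
Proof.
move=> D_diag D_spec j; have := D_spec (delta_mx j 0).
have frob_delta (a : R) : frob (a *: (delta_mx j 0 : 'cV[R]_n)) = `|a|.
  rewrite /frob -sqrtr_sqr; congr Num.sqrt.
  rewrite (bigD1 j) //= big_ord1 big1 ?addr0 => [|i ij]; first by rewrite !mxE !eqxx mulr1.
  by rewrite big_ord1 !mxE (negbTE ij) mulr0 expr0n.
have -> : D *m delta_mx j 0 = D j j *: (delta_mx j 0 : 'cV[R]_n).
  by apply/matrixP => i k; rewrite diag_mulmx // !mxE; case: eqP => [->|]; rewrite ?mulr0.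
by rewrite /vnorm frob_delta -[delta_mx j 0]scale1r frob_delta normr1 mulr1.
Qed.

Lemma spec_norm_diag_mx n (d : 'rV[R]_n) eps : 0 <= eps ->
  (forall i, `|d 0 i| <= eps) -> spec_norm_le (diag_mx d) eps.
Proof.
move=> eps_ge0 d_le x; rewrite /vnorm /frob.
rewrite -[eps in eps * _](ger0_norm eps_ge0) -sqrtr_sqr -sqrtrM ?sqr_ge0 //.
apply: ler_wsqrtr; rewrite mulr_sumr; apply: ler_sum => i _.
rewrite mulr_sumr; apply: ler_sum => k _.
rewrite diag_mulmx ?diag_mx_is_diag // mxE eqxx mulr1n exprMn.
apply: ler_wpM2r; first exact: sqr_ge0.
by rewrite -real_normK ?num_real // lerXn2r ?nnegrE ?normr_ge0.
Qed.

Definition diag_entry n (A : 'M[R]_n) (k : nat) : R :=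
  if insub k is Some i then A i i else 0.

Lemma diag_entryE n (A : 'M[R]_n) (i : 'I_n) : diag_entry A i = A i i.
Proof. by rewrite /diag_entry valK. Qed.

Lemma diag_entry_nonincr n (A : 'M[R]_n) : nonincr_diag A ->
  forall m k, (m <= k < n)%N -> diag_entry A k <= diag_entry A m.
Proof.
move=> A_dec m k /andP[le_mk lt_kn]; have lt_mn := leq_ltn_trans le_mk lt_kn.
by rewrite -[m]/(val (Ordinal lt_mn)) -[k]/(val (Ordinal lt_kn)) !diag_entryE A_dec.
Qed.
End DiagonalMatrices.

Section DiagonalApproximation.
Variable R : rcfType.

Definition clamp_mx n (eps : R) (A : 'M[R]_n) : 'M[R]_n :=
  diag_mx (\row_i clamp eps (A i i)).

Lemma clamp_mx_spec n eps (A : 'M[R]_n) : 0 <= eps -> spec_norm_le (clamp_mx eps A) eps.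
Proof. by move=> eps_ge0; apply: spec_norm_diag_mx => // i; rewrite mxE clamp_norm. Qed.

Lemma frob2_sub_clamp_mx n eps (A : 'M[R]_n) : is_diag_mx A ->
  frob2 (A - clamp_mx eps A) = \sum_i dist2 eps (A i i).
Proof.
move=> A_diag; rewrite frob2_diag ?is_diag_mxB ?diag_mx_is_diag //.
by apply: eq_bigr => i _; rewrite !mxE eqxx mulr1n.
Qed.

Lemma twisted_residual_lower_bound n eps (L Lo Le W : 'M[R]_n) :
  0 <= eps -> is_diag_mx L -> nonincr_diag L -> is_diag_mx Lo -> nonincr_diag Lo ->
  is_diag_mx Le -> (forall j, `|Le j j| <= eps) -> orth_mx W ->
  \sum_i dist2 eps (L i i - Lo i i) <= frob2 (L *m W - W *m (Lo + Le)).
Proof.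
move=> eps_ge0 L_diag L_dec Lo_diag Lo_dec Le_diag Le_le W_orth.
pose c i j := dist2 eps (diag_entry L i - diag_entry Lo j).
have c_monge i i' j j' : (i <= i' < n)%N -> (j <= j' < n)%N ->
    c i j + c i' j' <= c i j' + c i' j.
  by move=> ii' jj'; apply: dist2_exchange => //; apply: diag_entry_nonincr.
have sum_diag : \sum_(i < n) c i i = \sum_i dist2 eps (L i i - Lo i i).
  by apply: eq_bigr => i _; rewrite /c !diag_entryE.
rewrite -sum_diag frob2_diag_twist ?is_diag_mxD //.
apply: le_trans (monge_assignment c_monge (P := fun i j => W i j ^+ 2) _ _ _) _.
- by move=> i j; apply: sqr_ge0.
- by move=> i; apply: orth_row_sqr.
- by move=> j; apply: orth_col_sqr.
apply: ler_sum => i _; apply: ler_sum => j _; apply: ler_wpM2l; first exact: sqr_ge0.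
by rewrite /c !diag_entryE mxE opprD addrA dist2_le_sqr.
Qed.

Lemma conj_sub n (Q V A B : 'M[R]_n) : orth_mx Q -> orth_mx V ->
  Q *m A *m Q^T - V *m B *m V^T = Q *m (A *m (Q^T *m V) - (Q^T *m V) *m B) *m V^T.
Proof.
case=> Q_r _ [V_r _]; rewrite mulmxBr mulmxBl !mulmxA.
by rewrite -!(mulmxA _ V) V_r mulmx1 Q_r mul1mx.
Qed.
End DiagonalApproximation.

Theorem theorem4 (R : rcfType) (N : nat) (S Q L Lo Lstar : 'M[R]_N) (eps : R) :
  sym_mx S ->
  orth_mx Q -> is_diagonal L -> nonincr_diag L -> S = Q *m L *m Q^T ->
  is_diagonal Lo -> nonincr_diag Lo ->
  0 <= eps ->
  (* Lstar is the arg min over diagonal Le with ||Le||_2 <= eps of ||L - Lo - Le||_F *)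
  is_diagonal Lstar -> spec_norm_le Lstar eps ->
  (forall Le : 'M[R]_N, is_diagonal Le -> spec_norm_le Le eps ->
     frob (L - Lo - Lstar) <= frob (L - Lo - Le)) ->
  Meps Lo eps (Q *m (Lo + Lstar) *m Q^T) /\
  (forall M : 'M[R]_N, Meps Lo eps M ->
     frob (S - Q *m (Lo + Lstar) *m Q^T) <= frob (S - M)).
Proof.
move=> _ Q_orth L_diag L_dec -> Lo_diag Lo_dec eps_ge0 Ls_diag Ls_spec Ls_min.
split=> [|M [V [Le [V_orth Le_diag Le_spec ->]]]]; first by exists Q, Lstar.
(* The candidate's residual is that of the diagonal problem at Lstar, ... *)
have -> : Q *m L *m Q^T - Q *m (Lo + Lstar) *m Q^T = Q *m (L - Lo - Lstar) *m Q^T.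
  by rewrite -mulmxBl -mulmxBr opprD addrA.
rewrite frob_orth_mul //.
(* ... which is at most that of the clamped diagonal, ... *)
apply: le_trans
  (Ls_min (clamp_mx eps (L - Lo)) (diag_mx_is_diag _) (clamp_mx_spec _ eps_ge0)) _.
(* ... which bounds below the residual of every model V (Lo + Le) V^T. *)
rewrite conj_sub // frob_orth_mul //; apply: frob_le.
rewrite frob2_sub_clamp_mx ?is_diag_mxB //.
under eq_bigr do rewrite !mxE.
apply: twisted_residual_lower_bound => //.
- exact: spec_norm_diag_entry.
- exact: orth_mx_mul (orth_mx_tr Q_orth) V_orth.
Qed.
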